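(* Let $\mathbb{T}$ be a time scale, $I\subseteq\mathbb{R}$ an interval, $I_{\mathbb{T}}:=I\cap\mathbb{T}$, $t_0\in I_{\mathbb{T}}$, and let $p,q$ be real-valued right-dense continuous functions. Let $p_1,q_1\ge0$ be constants with $|p(t)|\le p_1$ and $|q(t)|\le q_1$ for all $t\in I_{\mathbb{T}}^{\kappa^2}$ with $t\ge t_0$, and set $k_1:=1+p_1+q_1$. If $y$ is any solution on $I_{\mathbb{T}}$ of $$y^{\Delta\Delta}(t)+p(t)y^{\Delta}(t)+q(t)y(t)=0,$$ then $$\|y(t)\|_2\le \|y(t_0)\|_2\, e_{k_1}(t,t_0)\qquad\text{for all } t\in I_{\mathbb{T}},\ t\ge t_0,$$ where $\|y(t)\|_2:=\big((y(t))^2+(y^\Delta(t))^2\big)^{1/2}$.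
   Context: A time scale $\mathbb{T}$ is a nonempty closed subset of $\mathbb{R}$; $\sigma(t):=\inf\{s\in\mathbb{T}:s>t\}$, $\mu(t):=\sigma(t)-t$, $y^\sigma=y\circ\sigma$, delta derivative $y^\Delta(t):=\lim_{s\to t}\frac{y^\sigma(t)-y(s)}{\sigma(t)-s}$, $y^{\Delta\Delta}=(y^\Delta)^\Delta$; $\mathbb{T}^{\kappa^2}$ denotes $\mathbb{T}$ with up to two left-scattered maximal points removed (iterating $\mathbb{T}^\kappa$). For a right-dense continuous $\ell$ with $1+\mu\ell\neq0$, $e_\ell(\cdot,t_0)$ is the unique solution of $\phi^\Delta=\ell\phi$, $\phi(t_0)=1$. *)

From Stdlib Require Import Reals.
From Coquelicot Require Import Coquelicot.
Open Scope R_scope.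

Definition time_scale (T : R -> Prop) : Prop :=
  (exists t, T t) /\ closed T.

(** Forward jump sigma(t) = inf {s in T | s > t}, with inf of the empty
    set := t (i.e. sigma(max T) = max T). *)
Definition sigma (T : R -> Prop) (t : R) : R :=
  match Glb_Rbar (fun s => T s /\ t < s) with
  | Finite x => x
  | _ => t
  end.

(** Backward jump rho(t) = sup {s in T | s < t}, with sup of empty := t. *)
Definition rho (T : R -> Prop) (t : R) : R :=
  match Lub_Rbar (fun s => T s /\ s < t) with
  | Finite x => x
  | _ => t
  end.

Definition mu (T : R -> Prop) (t : R) : R := sigma T t - t.

Definition right_dense (T : R -> Prop) (t : R) : Prop :=
  (exists s, T s /\ t < s) /\ sigma T t = t.
Definition left_dense (T : R -> Prop) (t : R) : Prop :=
  (exists s, T s /\ s < t) /\ rho T t = t.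
Definition left_scattered (T : R -> Prop) (t : R) : Prop := rho T t < t.

(** S^kappa : S with its maximum removed if that maximum is left-scattered
    (left-scatteredness measured inside S). *)
Definition kappa (S : R -> Prop) (t : R) : Prop :=
  S t /\ ~ ((forall s, S s -> s <= t) /\ left_scattered S t).

Definition delta_deriv (T : R -> Prop) (f : R -> R) (t l : R) : Prop :=
  forall eps : R, 0 < eps -> exists delta : R, 0 < delta /\
    forall s, T s -> Rabs (t - s) < delta ->
      Rabs (f (sigma T t) - f s - l * (sigma T t - s))
        <= eps * Rabs (sigma T t - s).

Definition rd_continuous (T S : R -> Prop) (f : R -> R) : Prop :=
  forall t, S t ->
    (right_dense T t ->
       forall eps, 0 < eps -> exists delta, 0 < delta /\
         forall s, S s -> Rabs (s - t) < delta -> Rabs (f s - f t) < eps) /\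
    (left_dense T t ->
       exists L, forall eps, 0 < eps -> exists delta, 0 < delta /\
         forall s, S s -> t - delta < s < t -> Rabs (f s - L) < eps).

(** phi is the exponential e_l(., t0): phi^Delta = l phi on T^kappa, phi(t0) = 1. *)
Definition is_dexp (T : R -> Prop) (l : R -> R) (t0 : R) (phi : R -> R) : Prop :=
  phi t0 = 1 /\ forall t, kappa T t -> delta_deriv T phi t (l t * phi t).

Definition is_interval (I : R -> Prop) : Prop :=
  forall a b c, I a -> I c -> a <= b <= c -> I b.

From Pilot Require Import Defs.
From Stdlib Require Import Reals Lra Psatz Classical.
From Coquelicot Require Import Coquelicot.
Open Scope R_scope.

(** The Euclidean norm [N] of the phase vector [(y, y^Delta)] grows along an
    Euler step of length [h] by at most the factor [1 + k1 h], because
    [|p| <= p1] and [|q| <= q1].  So [N] is a sub-solution of [x^Delta = k1 x]: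
    exactly across right-scattered points and up to [o(h)] at right-dense
    ones, while it is upper semicontinuous from the left.  Induction on the
    time scale then compares [N] with [N(t0) e_k1(., t0)]; to make the
    induction strict one proves [N(s) <= (N(t0) + eps (s - t0)) e_k1(s, t0)]
    for every [eps > 0] and lets [eps] tend to [0]. *)

Lemma Rle_of_le_plus_eps (x y K : R) :
  0 <= K -> (forall z, 0 < z -> x <= y + K * z) -> x <= y.
Proof.
  intros HK H. destruct (Rle_dec x y) as [Hxy | Hxy]; [exact Hxy |].
  exfalso.
  assert (Hz : 0 < (x - y) / (2 * (K + 1))) by (apply Rdiv_lt_0_compat; lra).
  specialize (H _ Hz).
  assert (K * ((x - y) / (2 * (K + 1))) < x - y).
  { unfold Rdiv. rewrite <- Rmult_assoc.
    apply Rmult_lt_reg_r with (2 * (K + 1)); [lra |].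
    rewrite Rmult_assoc, Rinv_l by lra. nra. }
  lra.
Qed.

Lemma eq0_of_Rabs_le_eps (x M : R) :
  0 <= M -> (forall e, 0 < e -> Rabs x <= e * M) -> x = 0.
Proof.
  intros HM H. apply Rabs_eq_0, Rle_antisym; [| apply Rabs_pos].
  apply Rle_of_le_plus_eps with M; [exact HM |].
  intros z Hz. rewrite Rplus_0_l, Rmult_comm. auto.
Qed.

Lemma inf_approx (F : R -> Prop) (a x0 : R) :
  F x0 -> (forall x, F x -> a <= x) ->
  exists m, (forall x, F x -> m <= x) /\
            (forall e, 0 < e -> exists x, F x /\ x < m + e).
Proof.
  intros Fx0 Ha.
  destruct (completeness (fun x => F (- x))) as [M [HM1 HM2]].
  { exists (- a). intros x Hx. specialize (Ha _ Hx). lra. }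
  { exists (- x0). rewrite Ropp_involutive. exact Fx0. }
  exists (- M). split.
  - intros x Fx.
    assert (- x <= M) by (apply HM1; rewrite Ropp_involutive; exact Fx). lra.
  - intros e He. apply NNPP. intros Hn.
    assert (M <= - (- M + e)).
    { apply HM2. intros x Fx. apply Rnot_lt_le. intros Hlt.
      apply Hn. exists (- x). split; [exact Fx | lra]. }
    lra.
Qed.

Lemma sup_approx (F : R -> Prop) (b x0 : R) :
  F x0 -> (forall x, F x -> x <= b) ->
  exists m, (forall x, F x -> x <= m) /\
            (forall e, 0 < e -> exists x, F x /\ m - e < x).
Proof.
  intros Fx0 Hb.
  destruct (inf_approx (fun x => F (- x)) (- b) (- x0)) as [m [H1 H2]].
  { rewrite Ropp_involutive. exact Fx0. }
  { intros x Fx. specialize (Hb _ Fx). lra. }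
  exists (- m). split.
  - intros x Fx.
    assert (m <= - x) by (apply H1; rewrite Ropp_involutive; exact Fx). lra.
  - intros e He. destruct (H2 e He) as [x [Fx Hx]].
    exists (- x). split; [exact Fx | lra].
Qed.

Lemma closed_of_approx (T : R -> Prop) (m : R) :
  closed T -> (forall e, 0 < e -> exists x, T x /\ Rabs (x - m) < e) -> T m.
Proof.
  intros HT H. apply HT. intros [eps Heps].
  destruct (H eps (cond_pos eps)) as [x [Tx Hx]]. exact (Heps x Hx Tx).
Qed.

Definition approached_from_left (T : R -> Prop) (s : R) : Prop :=
  forall d, 0 < d -> exists r, T r /\ s - d < r < s.

Definition approached_from_right (T : R -> Prop) (s : R) : Prop :=
  forall d, 0 < d -> exists r, T r /\ s < r < s + d.

Lemma approached_from_left_weaken (P Q : R -> Prop) (s : R) :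
  (forall r, P r -> Q r) -> approached_from_left P s -> approached_from_left Q s.
Proof.
  intros HPQ H d Hd. destruct (H d Hd) as [r [Pr Hr]]. exists r. auto.
Qed.

Lemma sigma_eq_of_gap (T : R -> Prop) (r m : R) :
  T m -> r < m -> (forall x, T x -> r < x -> m <= x) -> Defs.sigma T r = m.
Proof.
  intros Tm Hrm Hgap. unfold Defs.sigma.
  rewrite (is_glb_Rbar_unique _ (Finite m)); [reflexivity |]. split.
  - intros x [Tx Hx]. simpl. auto.
  - intros b Hb. exact (Hb m (conj Tm Hrm)).
Qed.

Lemma sigma_eq_of_approached (T : R -> Prop) (m : R) :
  approached_from_right T m -> Defs.sigma T m = m.
Proof.
  intros H. unfold Defs.sigma.
  rewrite (is_glb_Rbar_unique _ (Finite m)); [reflexivity |]. split.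
  - intros x [Tx Hx]. simpl. lra.
  - intros [b | |] Hb; simpl; auto.
    + apply Rnot_lt_le. intros Hlt.
      destruct (H (b - m)) as [x [Tx Hx]]; [lra |].
      specialize (Hb x (conj Tx (proj1 Hx))). simpl in Hb. lra.
    + destruct (H 1) as [x [Tx Hx]]; [lra |].
      exact (Hb x (conj Tx (proj1 Hx))).
Qed.

Lemma rho_eq_of_approached (T : R -> Prop) (t : R) :
  approached_from_left T t -> rho T t = t.
Proof.
  intros H. unfold rho.
  rewrite (is_lub_Rbar_unique _ (Finite t)); [reflexivity |]. split.
  - intros x [Tx Hx]. simpl. lra.
  - intros [b | |] Hb; simpl; auto.
    + apply Rnot_lt_le. intros Hlt.
      destruct (H (t - b)) as [x [Tx Hx]]; [lra |].
      specialize (Hb x (conj Tx (proj2 Hx))). simpl in Hb. lra.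
    + destruct (H 1) as [x [Tx Hx]]; [lra |].
      exact (Hb x (conj Tx (proj2 Hx))).
Qed.

Lemma kappa_of_lt (P : R -> Prop) (s u : R) : P s -> P u -> s < u -> kappa P s.
Proof.
  intros Ps Pu Hsu. split; [exact Ps |]. intros [Hmax _].
  specialize (Hmax u Pu). lra.
Qed.

Lemma kappa_of_approached (P : R -> Prop) (s : R) :
  P s -> approached_from_left P s -> kappa P s.
Proof.
  intros Ps H. split; [exact Ps |]. intros [_ Hls].
  unfold left_scattered in Hls. rewrite rho_eq_of_approached in Hls; [lra | exact H].
Qed.

Lemma kappa2_of_lt (P : R -> Prop) (s t : R) :
  P s -> kappa P t -> s < t -> kappa (kappa P) s.
Proof.
  intros Ps Kt Hst. apply kappa_of_lt with t; [| exact Kt | exact Hst].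
  apply kappa_of_lt with t; [exact Ps | exact (proj1 Kt) | exact Hst].
Qed.

Lemma kappa2_of_approached (P : R -> Prop) (s : R) :
  P s -> approached_from_left (kappa (kappa P)) s -> kappa (kappa P) s.
Proof.
  intros Ps H. apply kappa_of_approached.
  - apply kappa_of_approached; [exact Ps |].
    apply (approached_from_left_weaken (kappa (kappa P))); [| exact H].
    intros r Kr. exact (proj1 (proj1 Kr)).
  - apply (approached_from_left_weaken (kappa (kappa P))); [| exact H].
    intros r Kr. exact (proj1 Kr).
Qed.

Lemma sigma_eq_of_not_approached (T : R -> Prop) (a m : R) :
  closed T -> T a -> T m -> a < m -> ~ approached_from_left T m ->
  exists r, T r /\ a <= r < m /\ Defs.sigma T r = m.
Proof.
  intros HT Ta Tm Ham Hnot.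
  apply not_all_ex_not in Hnot. destruct Hnot as [d Hd].
  apply imply_to_and in Hd. destruct Hd as [Hd Hgap].
  set (G := fun r => T r /\ a <= r < m).
  destruct (sup_approx G m a) as [r [Hr1 Hr2]].
  { split; [exact Ta | lra]. }
  { intros x [_ Hx]. lra. }
  assert (Har : a <= r) by (apply Hr1; split; [exact Ta | lra]).
  assert (Hrm : r <= m - d).
  { apply Rnot_lt_le. intros Hlt.
    destruct (Hr2 (r - (m - d))) as [x [[Tx Hx] Hx']]; [lra |].
    apply Hgap. exists x. split; [exact Tx | lra]. }
  assert (Tr : T r).
  { apply closed_of_approx; [exact HT |]. intros e He.
    destruct (Hr2 e He) as [x [Gx Hx]]. exists x. split; [apply Gx |].
    specialize (Hr1 x Gx). rewrite Rabs_left1; lra. }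
  exists r. repeat split; [exact Tr | exact Har | lra |].
  apply sigma_eq_of_gap; [exact Tm | lra |].
  intros x Tx Hx. apply Rnot_lt_le. intros Hxm.
  assert (Gx : G x) by (split; [exact Tx | lra]).
  specialize (Hr1 x Gx). lra.
Qed.

(** * Induction on a time scale *)

Lemma time_scale_induction (T P : R -> Prop) (a b : R) :
  closed T -> T a -> P a ->
  (forall s, T s -> a <= s < b -> P s ->
     (Defs.sigma T s = s ->
        exists d, 0 < d /\ forall r, T r -> s < r < s + d -> P r) /\
     (s < Defs.sigma T s -> P (Defs.sigma T s))) ->
  (forall s, T s -> a < s <= b -> approached_from_left T s ->
     (forall r, T r -> a <= r < s -> P r) -> P s) ->
  forall s, T s -> a <= s <= b -> P s.
Proof.
  intros HT Ta Pa Hstep Hleft s0 Ts0 Hs0. apply NNPP. intros Hns0.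
  (* [m] is the infimum of the counterexamples in [[a, b]]. *)
  set (F := fun x => T x /\ a <= x <= b /\ ~ P x).
  destruct (inf_approx F a s0) as [m [Hm1 Hm2]].
  { exact (conj Ts0 (conj Hs0 Hns0)). }
  { intros x [_ [Hx _]]. lra. }
  assert (Ham : a <= m).
  { apply Rnot_lt_le. intros Hlt.
    destruct (Hm2 (a - m)) as [x [[_ [Hx _]] Hx']]; lra. }
  assert (Hms0 : m <= s0) by (apply Hm1; exact (conj Ts0 (conj Hs0 Hns0))).
  assert (Tm : T m).
  { apply closed_of_approx; [exact HT |]. intros e He.
    destruct (Hm2 e He) as [x [Fx Hx]]. exists x. split; [apply Fx |].
    specialize (Hm1 x Fx). rewrite Rabs_right; lra. }
  assert (Pbelow : forall r, T r -> a <= r < m -> P r).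
  { intros r Tr Hr. apply NNPP. intros Hnr.
    assert (Fr : F r) by (repeat split; auto; lra).
    specialize (Hm1 r Fr). lra. }
  assert (Pm : P m).
  { destruct (Req_dec m a) as [-> | Hma]; [exact Pa |].
    destruct (classic (approached_from_left T m)) as [Happ | Happ].
    - apply Hleft; auto; lra.
    - destruct (sigma_eq_of_not_approached T a m) as [r [Tr [Hr Hsig]]];
        auto; [lra |].
      rewrite <- Hsig. apply (Hstep r Tr); [lra | apply Pbelow; auto | lra]. }
  assert (Hms : m < s0) by (destruct (Req_dec m s0) as [-> | ]; [contradiction | lra]).
  assert (Happ : approached_from_right T m).
  { intros d Hd. destruct (Hm2 d Hd) as [x [Fx Hx]].
    pose proof (Hm1 x Fx) as Hmx. destruct Fx as [Tx [_ Hnx]].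
    exists x. split; [exact Tx |].
    destruct (Req_dec x m) as [-> | ]; [contradiction | lra]. }
  destruct (Hstep m Tm) as [Hrd _]; [lra | exact Pm |].
  destruct (Hrd (sigma_eq_of_approached T m Happ)) as [d [Hd Hnear]].
  destruct (Hm2 d Hd) as [x [Fx Hx]]. pose proof (Hm1 x Fx) as Hmx.
  destruct Fx as [Tx [_ Hnx]]. apply Hnx, Hnear; [exact Tx |].
  destruct (Req_dec x m) as [-> | ]; [contradiction | lra].
Qed.

Lemma delta_deriv_sigma (T : R -> Prop) (f : R -> R) (t l : R) :
  delta_deriv T f t l -> T t -> f (Defs.sigma T t) = f t + l * mu T t.
Proof.
  intros Hf Tt. unfold mu.
  enough (f (Defs.sigma T t) - f t - l * (Defs.sigma T t - t) = 0) by lra.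
  apply eq0_of_Rabs_le_eps with (Rabs (Defs.sigma T t - t)); [apply Rabs_pos |].
  intros e He. destruct (Hf e He) as [d [Hd Hnear]].
  apply Hnear; [exact Tt |]. rewrite Rminus_diag, Rabs_R0. exact Hd.
Qed.

Lemma delta_deriv_right_dense (T : R -> Prop) (f : R -> R) (t l : R) :
  delta_deriv T f t l -> Defs.sigma T t = t ->
  forall e, 0 < e -> exists d, 0 < d /\ forall r, T r -> t < r < t + d ->
    Rabs (f r - f t - l * (r - t)) <= e * (r - t).
Proof.
  intros Hf Hsig e He. destruct (Hf e He) as [d [Hd Hnear]].
  exists d. split; [exact Hd |]. intros r Tr Hr.
  assert (Hdist : Rabs (t - r) < d) by (rewrite Rabs_left; lra).
  specialize (Hnear r Tr Hdist). rewrite Hsig, (Rabs_left (t - r)) in Hnear by lra.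
  replace (f r - f t - l * (r - t)) with (- (f t - f r - l * (t - r))) by ring.
  rewrite Rabs_Ropp. lra.
Qed.

Lemma delta_deriv_continuous (T : R -> Prop) (f : R -> R) (t l : R) :
  delta_deriv T f t l -> T t ->
  forall e, 0 < e -> exists d, 0 < d /\ forall r, T r -> Rabs (t - r) < d ->
    Rabs (f r - f t) <= e.
Proof.
  intros Hf Tt e He.
  set (M := Rabs (Defs.sigma T t - t)).
  assert (HM : 0 <= M) by apply Rabs_pos.
  assert (Hl : 0 <= Rabs l) by apply Rabs_pos.
  set (eta := e / (2 * (M + 1))).
  assert (Heta : 0 < eta) by (apply Rdiv_lt_0_compat; lra).
  destruct (Hf eta Heta) as [d [Hd Hnear]].
  pose proof (delta_deriv_sigma T f t l Hf Tt) as Hsig. unfold mu in Hsig.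
  set (d' := Rmin (Rmin d 1) (e / (2 * (Rabs l + 1)))).
  assert (Hd' : 0 < d').
  { repeat apply Rmin_pos; [lra | lra | apply Rdiv_lt_0_compat; lra]. }
  exists d'. split; [exact Hd' |]. intros r Tr Htr.
  assert (Hd'1 : d' <= Rmin d 1) by apply Rmin_l.
  pose proof (Rmin_l d 1). pose proof (Rmin_r d 1).
  assert (Hd'2 : d' <= e / (2 * (Rabs l + 1))) by apply Rmin_r.
  specialize (Hnear r Tr ltac:(lra)).
  assert (Hfar : Rabs (Defs.sigma T t - r) <= M + 1).
  { replace (Defs.sigma T t - r) with ((Defs.sigma T t - t) + (t - r)) by ring.
    eapply Rle_trans; [apply Rabs_triang | unfold M; lra]. }
  assert (Hb : eta * Rabs (Defs.sigma T t - r) <= e / 2).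
  { apply Rle_trans with (eta * (M + 1)); [apply Rmult_le_compat_l; lra |].
    right. unfold eta. field. lra. }
  assert (Hc : Rabs l * Rabs (t - r) <= e / 2).
  { apply Rle_trans with ((Rabs l + 1) * (e / (2 * (Rabs l + 1)))).
    - apply Rmult_le_compat; [lra | apply Rabs_pos | lra | lra].
    - right. field. lra. }
  replace (f r - f t) with
    (- (f (Defs.sigma T t) - f r - l * (Defs.sigma T t - r)) + l * (r - t))
    by (rewrite Hsig; ring).
  eapply Rle_trans; [apply Rabs_triang |].
  rewrite Rabs_Ropp, Rabs_mult, (Rabs_minus_sym r t). lra.
Qed.

(** * A comparison principle *)

Lemma comparison_step (k C eps h eta ns nr fs fr : R) :
  1 <= k -> 0 <= C -> 0 < eps -> 0 <= h -> 0 <= eta <= fs ->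
  eta * (C + eps * h + 1) <= eps * (1 + k * h) * fs ->
  1 <= fs -> ns <= C * fs ->
  nr <= (1 + k * h) * ns + eta * h -> (1 + k * h) * fs - eta * h <= fr ->
  1 <= fr /\ nr <= (C + eps * h) * fr.
Proof.
  intros Hk HC Heps Hh Heta Hsmall Hfs Hns Hnr Hfr.
  assert (Hgrow : 0 <= h * (k * fs - eta)) by (apply Rmult_le_pos; nra).
  split; [nra |].
  assert (Hnr' : nr <= (1 + k * h) * (C * fs) + eta * h).
  { assert ((1 + k * h) * ns <= (1 + k * h) * (C * fs)) by (apply Rmult_le_compat_l; nra). lra. }
  assert ((C + eps * h) * ((1 + k * h) * fs - eta * h) <= (C + eps * h) * fr)
    by (apply Rmult_le_compat_l; nra).
  assert (0 <= h * (eps * (1 + k * h) * fs - eta * (C + eps * h + 1))) by (apply Rmult_le_pos; lra).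
  nra.
Qed.

Section Comparison.

Variables (T : R -> Prop) (N phi : R -> R) (k t0 t : R).

Hypotheses (HT : closed T) (Hk : 1 <= k) (Tt0 : T t0) (Tt : T t)
  (HN0 : 0 <= N t0) (Hphi : is_dexp T (fun _ => k) t0 phi).

Hypothesis HN_sigma : forall s, T s -> t0 <= s < t -> s < Defs.sigma T s ->
  N (Defs.sigma T s) <= (1 + k * mu T s) * N s.

Hypothesis HN_right : forall s, T s -> t0 <= s < t -> Defs.sigma T s = s ->
  forall eta, 0 < eta -> exists d, 0 < d /\ forall r, T r -> s < r < s + d ->
    N r <= (1 + k * (r - s)) * N s + eta * (r - s).

Hypothesis HN_left : forall s, T s -> t0 < s <= t -> approached_from_left T s ->
  forall z, 0 < z -> exists d, 0 < d /\ forall r, T r -> s - d < r < s ->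
    N s <= N r + z.

Let bound (eps s : R) : Prop :=
  1 <= phi s /\ N s <= (N t0 + eps * (s - t0)) * phi s.

Lemma bound_sigma (eps s : R) : 0 < eps -> T s -> t0 <= s < t ->
  s < Defs.sigma T s -> bound eps s -> bound eps (Defs.sigma T s).
Proof.
  intros Heps Ts Hs Hrs [Hphis Hns].
  assert (Hmu : 0 < mu T s) by (unfold mu; lra).
  assert (Dphi : delta_deriv T phi s (k * phi s)).
  { apply (proj2 Hphi). apply kappa_of_lt with t; [exact Ts | exact Tt | lra]. }
  pose proof (delta_deriv_sigma T phi s _ Dphi Ts) as Hphi_sigma.
  unfold bound. replace (N t0 + eps * (Defs.sigma T s - t0))
    with (N t0 + eps * (s - t0) + eps * mu T s) by (unfold mu; ring).
  apply comparison_step with (k := k) (eta := 0) (ns := N s) (fs := phi s);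
    [exact Hk | nra | exact Heps | lra | lra | | exact Hphis | exact Hns | |].
  - rewrite Rmult_0_l. apply Rmult_le_pos; [apply Rmult_le_pos |]; nra.
  - rewrite Rmult_0_l, Rplus_0_r. apply HN_sigma; assumption.
  - rewrite Hphi_sigma. lra.
Qed.

Lemma bound_right_dense (eps s : R) : 0 < eps -> T s -> t0 <= s < t ->
  Defs.sigma T s = s -> bound eps s ->
  exists d, 0 < d /\ forall r, T r -> s < r < s + d -> bound eps r.
Proof.
  intros Heps Ts Hs Hsig [Hphis Hns].
  set (C := N t0 + eps * (s - t0)) in Hns.
  assert (HC : 0 <= C) by (unfold C; nra).
  assert (Dphi : delta_deriv T phi s (k * phi s)).
  { apply (proj2 Hphi). apply kappa_of_lt with t; [exact Ts | exact Tt | lra]. }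
  (* [eta] makes the comparison step valid for every step length [h <= 1]. *)
  set (eta := eps * phi s / (C + eps + 1)).
  assert (Heta_def : eta * (C + eps + 1) = eps * phi s) by (unfold eta; field; lra).
  assert (Heta : 0 < eta) by (unfold eta; apply Rdiv_lt_0_compat; nra).
  destruct (HN_right s Ts Hs Hsig eta Heta) as [d1 [Hd1 HN]].
  destruct (delta_deriv_right_dense T phi s _ Dphi Hsig eta Heta) as [d2 [Hd2 Hf]].
  exists (Rmin (Rmin d1 d2) 1). split; [repeat apply Rmin_pos; lra |].
  intros r Tr Hr.
  pose proof (Rmin_l (Rmin d1 d2) 1). pose proof (Rmin_r (Rmin d1 d2) 1).
  pose proof (Rmin_l d1 d2). pose proof (Rmin_r d1 d2).
  specialize (HN r Tr ltac:(lra)). specialize (Hf r Tr ltac:(lra)).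
  set (h := r - s) in HN, Hf.
  assert (Hh : 0 < h <= 1) by (unfold h; lra).
  unfold bound. replace (N t0 + eps * (r - t0)) with (C + eps * h) by (unfold C, h; ring).
  apply comparison_step with (k := k) (eta := eta) (ns := N s) (fs := phi s);
    [exact Hk | exact HC | exact Heps | lra | split; nra | | exact Hphis | exact Hns
    | exact HN |].
  - apply Rle_trans with (eta * (C + eps + 1)); [apply Rmult_le_compat_l; nra |].
    rewrite Heta_def, Rmult_assoc. apply Rmult_le_compat_l; [lra |].
    assert (0 <= k * h * phi s) by (repeat apply Rmult_le_pos; lra). lra.
  - pose proof (Rle_abs (- (phi r - phi s - k * phi s * h))) as Habs.
    rewrite Rabs_Ropp in Habs. lra.
Qed.

Lemma bound_left_dense (eps s : R) : 0 < eps -> T s -> t0 < s <= t ->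
  approached_from_left T s -> (forall r, T r -> t0 <= r < s -> bound eps r) ->
  bound eps s.
Proof.
  intros Heps Ts Hs Happ Hbelow.
  set (C := N t0 + eps * (s - t0)).
  assert (HC : 0 <= C) by (unfold C; nra).
  assert (Dphi : delta_deriv T phi s (k * phi s)).
  { apply (proj2 Hphi). apply kappa_of_approached; [exact Ts | exact Happ]. }
  assert (Hnear : forall z, 0 < z -> exists r, T r /\ t0 <= r < s /\
            phi r <= phi s + z /\ N s <= N r + z).
  { intros z Hz.
    destruct (delta_deriv_continuous T phi s _ Dphi Ts z Hz) as [d1 [Hd1 Hf]].
    destruct (HN_left s Ts Hs Happ z Hz) as [d2 [Hd2 HN]].
    destruct (Happ (Rmin (Rmin d1 d2) (s - t0))) as [r [Tr Hr]];
      [repeat apply Rmin_pos; lra |].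
    pose proof (Rmin_l (Rmin d1 d2) (s - t0)). pose proof (Rmin_r (Rmin d1 d2) (s - t0)).
    pose proof (Rmin_l d1 d2). pose proof (Rmin_r d1 d2).
    exists r. repeat split; [exact Tr | lra | lra | |].
    - specialize (Hf r Tr ltac:(rewrite Rabs_right; lra)).
      pose proof (Rle_abs (phi r - phi s)). lra.
    - apply HN; [exact Tr | lra]. }
  assert (Hphis : 1 <= phi s).
  { apply Rle_of_le_plus_eps with 1; [lra |]. intros z Hz.
    destruct (Hnear z Hz) as [r [Tr [Hr [Hphir _]]]].
    destruct (Hbelow r Tr Hr) as [H1 _]. lra. }
  unfold bound. fold C. split; [exact Hphis |].
  apply Rle_of_le_plus_eps with (C + 1); [lra |]. intros z Hz.
  destruct (Hnear z Hz) as [r [Tr [Hr [Hphir HNr]]]].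
  destruct (Hbelow r Tr Hr) as [H1 Hbr].
  assert (N t0 + eps * (r - t0) <= C) by (unfold C; nra).
  assert ((N t0 + eps * (r - t0)) * phi r <= C * phi r) by nra.
  assert (C * phi r <= C * (phi s + z)) by (apply Rmult_le_compat_l; lra).
  lra.
Qed.

Lemma bound_on_interval (eps : R) : 0 < eps ->
  forall s, T s -> t0 <= s <= t -> bound eps s.
Proof.
  intros Heps. apply time_scale_induction; [exact HT | exact Tt0 | | |].
  - unfold bound. rewrite (proj1 Hphi). split; lra.
  - intros s Ts Hs Hb. split.
    + intros Hsig. exact (bound_right_dense eps s Heps Ts Hs Hsig Hb).
    + intros Hsig. exact (bound_sigma eps s Heps Ts Hs Hsig Hb).
  - intros s Ts Hs Happ Hbelow. exact (bound_left_dense eps s Heps Ts Hs Happ Hbelow).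
Qed.

Lemma comparison_principle : t0 <= t -> N t <= N t0 * phi t.
Proof.
  intros Ht.
  destruct (bound_on_interval 1 Rlt_0_1 t Tt (conj Ht (Rle_refl t))) as [Hphit _].
  apply Rle_of_le_plus_eps with ((t - t0) * phi t); [nra |]. intros z Hz.
  destruct (bound_on_interval z Hz t Tt (conj Ht (Rle_refl t))) as [_ Hb]. nra.
Qed.

End Comparison.

(** * The phase norm of the second-order equation *)

Definition phase_norm (a b : R) : R := sqrt (a ^ 2 + b ^ 2).

Lemma sqrt_le_of_le_sq (x z : R) : 0 <= z -> x <= z * z -> sqrt x <= z.
Proof.
  intros Hz H. rewrite <- (sqrt_square z Hz). apply sqrt_le_1_alt. exact H.
Qed.

Lemma phase_norm_add_le (a b e1 e2 : R) :
  phase_norm (a + e1) (b + e2) <= phase_norm a b + Rabs e1 + Rabs e2.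
Proof.
  unfold phase_norm.
  assert (HS : 0 <= a ^ 2 + b ^ 2) by nra.
  pose proof (sqrt_sqrt _ HS) as HSS. pose proof (sqrt_pos (a ^ 2 + b ^ 2)) as HSp.
  set (S := sqrt (a ^ 2 + b ^ 2)) in *.
  pose proof (Rabs_pos e1). pose proof (Rabs_pos e2).
  apply sqrt_le_of_le_sq; [lra |].
  assert (Hcs : forall c e, c ^ 2 <= S * S -> c * e <= S * Rabs e).
  { intros c e Hc.
    assert (Rabs c <= S).
    { apply Rsqr_incr_0_var; [| exact HSp]. unfold Rsqr.
      rewrite <- Rabs_mult, Rabs_right by nra. nra. }
    apply Rle_trans with (Rabs c * Rabs e).
    - rewrite <- Rabs_mult. apply Rle_abs.
    - apply Rmult_le_compat_r; [apply Rabs_pos | assumption]. }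
  pose proof (Hcs a e1 ltac:(nra)). pose proof (Hcs b e2 ltac:(nra)).
  assert (e1 ^ 2 = Rabs e1 * Rabs e1) by (rewrite <- Rabs_mult, Rabs_right by nra; ring).
  assert (e2 ^ 2 = Rabs e2 * Rabs e2) by (rewrite <- Rabs_mult, Rabs_right by nra; ring).
  nra.
Qed.

Lemma euler_step_sq_le (a b p q p1 q1 h : R) :
  0 <= h -> Rabs p <= p1 -> Rabs q <= q1 ->
  (a + h * b) ^ 2 + (b + h * (- p * b - q * a)) ^ 2
    <= (1 + (1 + p1 + q1) * h) ^ 2 * (a ^ 2 + b ^ 2).
Proof.
  intros Hh Hp Hq.
  pose proof (Rabs_pos p). pose proof (Rabs_pos q).
  set (k := 1 + p1 + q1). set (M := a ^ 2 + b ^ 2).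
  assert (HM : 0 <= M) by (unfold M; nra).
  assert (Hlin : a * b - p * b ^ 2 - q * a * b <= k * M).
  { assert (a * b <= M) by (unfold M; nra).
    assert (- p * b ^ 2 <= p1 * M).
    { assert (- p <= p1) by (pose proof (Rle_abs (- p)); rewrite Rabs_Ropp in *; lra).
      unfold M. nra. }
    assert (- q * (a * b) <= q1 * M).
    { assert (Rabs (a * b) <= M) by (unfold M; apply Rabs_le; split; nra).
      apply Rle_trans with (Rabs q * Rabs (a * b)).
      - rewrite <- Rabs_mult, <- Rabs_Ropp. replace (- q * (a * b)) with (- (q * (a * b))) by ring.
        apply Rle_abs.
      - apply Rmult_le_compat; auto; apply Rabs_pos. }
    unfold k. nra. }
  assert (Hquad : b ^ 2 + (p * b + q * a) ^ 2 <= k ^ 2 * M).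
  { assert ((p * b + q * a) ^ 2 <= (p ^ 2 + q ^ 2) * M)
      by (unfold M; pose proof (pow2_ge_0 (p * a - q * b)); nra).
    assert (p ^ 2 <= p1 ^ 2) by (rewrite <- pow2_abs; nra).
    assert (q ^ 2 <= q1 ^ 2) by (rewrite <- pow2_abs; nra).
    assert (b ^ 2 <= M) by (unfold M; nra).
    assert (1 + p1 ^ 2 + q1 ^ 2 <= k ^ 2) by (unfold k; nra).
    nra. }
  replace ((a + h * b) ^ 2 + (b + h * (- p * b - q * a)) ^ 2) with
    (M + 2 * h * (a * b - p * b ^ 2 - q * a * b) + h ^ 2 * (b ^ 2 + (p * b + q * a) ^ 2))
    by (unfold M; ring).
  assert (h ^ 2 * (b ^ 2 + (p * b + q * a) ^ 2) <= h ^ 2 * (k ^ 2 * M))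
    by (apply Rmult_le_compat_l; nra).
  nra.
Qed.

Lemma phase_norm_euler_step_le (a b p q p1 q1 h : R) :
  0 <= h -> Rabs p <= p1 -> Rabs q <= q1 ->
  phase_norm (a + h * b) (b + h * (- p * b - q * a))
    <= (1 + (1 + p1 + q1) * h) * phase_norm a b.
Proof.
  intros Hh Hp Hq. pose proof (Rabs_pos p). pose proof (Rabs_pos q).
  unfold phase_norm. apply sqrt_le_of_le_sq.
  - apply Rmult_le_pos; [nra | apply sqrt_pos].
  - eapply Rle_trans; [apply euler_step_sq_le; eassumption |].
    assert (Hab : 0 <= a ^ 2 + b ^ 2) by nra.
    pose proof (sqrt_sqrt _ Hab) as Hsq. right.
    rewrite <- Hsq at 1. ring.
Qed.

Section SecondOrderStep.

Variables (T : R -> Prop) (p q y yd ydd : R -> R) (p1 q1 s : R).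

Hypotheses (Dy : delta_deriv T y s (yd s)) (Dyd : delta_deriv T yd s (ydd s))
  (Hode : ydd s + p s * yd s + q s * y s = 0)
  (Hp : Rabs (p s) <= p1) (Hq : Rabs (q s) <= q1).

Lemma phase_norm_sigma_le : T s -> s <= Defs.sigma T s ->
  phase_norm (y (Defs.sigma T s)) (yd (Defs.sigma T s))
    <= (1 + (1 + p1 + q1) * mu T s) * phase_norm (y s) (yd s).
Proof.
  intros Ts Hsig.
  rewrite (delta_deriv_sigma T y s _ Dy Ts), (delta_deriv_sigma T yd s _ Dyd Ts).
  replace (ydd s) with (- p s * yd s - q s * y s) by lra.
  rewrite (Rmult_comm (yd s)), (Rmult_comm (- p s * yd s - q s * y s)).
  apply phase_norm_euler_step_le; [unfold mu; lra | exact Hp | exact Hq].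
Qed.

Lemma phase_norm_right_dense_le : Defs.sigma T s = s ->
  forall eta, 0 < eta -> exists d, 0 < d /\ forall r, T r -> s < r < s + d ->
    phase_norm (y r) (yd r)
      <= (1 + (1 + p1 + q1) * (r - s)) * phase_norm (y s) (yd s) + eta * (r - s).
Proof.
  intros Hsig eta Heta.
  destruct (delta_deriv_right_dense T y s _ Dy Hsig (eta / 2)) as [d1 [Hd1 H1]]; [lra |].
  destruct (delta_deriv_right_dense T yd s _ Dyd Hsig (eta / 2)) as [d2 [Hd2 H2]]; [lra |].
  exists (Rmin d1 d2). split; [apply Rmin_pos; lra |]. intros r Tr Hr.
  pose proof (Rmin_l d1 d2). pose proof (Rmin_r d1 d2).
  specialize (H1 r Tr ltac:(lra)). specialize (H2 r Tr ltac:(lra)).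
  set (h := r - s) in *.
  set (e1 := y r - y s - yd s * h) in H1.
  set (e2 := yd r - yd s - ydd s * h) in H2.
  replace (y r) with (y s + h * yd s + e1) by (unfold e1; ring).
  replace (yd r) with (yd s + h * (- p s * yd s - q s * y s) + e2)
    by (unfold e2; replace (ydd s) with (- p s * yd s - q s * y s) by lra; ring).
  eapply Rle_trans; [apply phase_norm_add_le |].
  pose proof (phase_norm_euler_step_le (y s) (yd s) (p s) (q s) p1 q1 h
                ltac:(unfold h; lra) Hp Hq).
  lra.
Qed.

Lemma phase_norm_left_le : T s ->
  forall z, 0 < z -> exists d, 0 < d /\ forall r, T r -> s - d < r < s ->
    phase_norm (y s) (yd s) <= phase_norm (y r) (yd r) + z.
Proof.
  intros Ts z Hz.
  destruct (delta_deriv_continuous T y s _ Dy Ts (z / 2)) as [d1 [Hd1 H1]]; [lra |].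
  destruct (delta_deriv_continuous T yd s _ Dyd Ts (z / 2)) as [d2 [Hd2 H2]]; [lra |].
  exists (Rmin d1 d2). split; [apply Rmin_pos; lra |]. intros r Tr Hr.
  pose proof (Rmin_l d1 d2). pose proof (Rmin_r d1 d2).
  assert (Hdist : Rabs (s - r) < Rmin d1 d2) by (rewrite Rabs_right; lra).
  specialize (H1 r Tr ltac:(lra)). specialize (H2 r Tr ltac:(lra)).
  pose proof (phase_norm_add_le (y r) (yd r) (y s - y r) (yd s - yd r)) as Hadd.
  replace (y r + (y s - y r)) with (y s) in Hadd by ring.
  replace (yd r + (yd s - yd r)) with (yd s) in Hadd by ring.
  rewrite (Rabs_minus_sym (y s)), (Rabs_minus_sym (yd s)) in Hadd.
  lra.
Qed.

End SecondOrderStep.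

Theorem theorem2p4
  (T I : R -> Prop) (t0 : R) (p q : R -> R) (p1 q1 : R)
  (y yd ydd phi : R -> R) :
  time_scale T ->
  is_interval I ->
  (I t0 /\ T t0) ->
  rd_continuous T (fun t => I t /\ T t) p ->
  rd_continuous T (fun t => I t /\ T t) q ->
  0 <= p1 -> 0 <= q1 ->
  (forall t, kappa (kappa (fun s => I s /\ T s)) t -> t0 <= t ->
     Rabs (p t) <= p1 /\ Rabs (q t) <= q1) ->
  (forall t, kappa (fun s => I s /\ T s) t -> delta_deriv T y t (yd t)) ->
  (forall t, kappa (kappa (fun s => I s /\ T s)) t ->
     delta_deriv T yd t (ydd t) /\ ydd t + p t * yd t + q t * y t = 0) ->
  is_dexp T (fun _ => 1 + p1 + q1) t0 phi ->
  forall t, kappa (fun s => I s /\ T s) t -> t0 <= t ->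
    sqrt (y t ^ 2 + yd t ^ 2) <= sqrt (y t0 ^ 2 + yd t0 ^ 2) * phi t.
Proof.
  (* The rd-continuity of [p] and [q] only matters for the existence of [y]. *)
  intros [_ HT] HI [It0 Tt0] _ _ Hp1 Hq1 Hbd Hy Hyd Hphi t Ht Ht0t.
  set (S := fun s => I s /\ T s) in *.
  assert (HS : forall s, T s -> t0 <= s <= t -> S s).
  { intros s Ts Hs. split; [| exact Ts].
    apply (HI t0 s t); [exact It0 | apply (proj1 Ht) | exact Hs]. }
  assert (Hbefore : forall s, T s -> t0 <= s < t -> kappa (kappa S) s).
  { intros s Ts Hs. apply kappa2_of_lt with t; [apply HS; [exact Ts | lra] | exact Ht | lra]. }
  assert (Hleft : forall s, T s -> t0 < s <= t -> approached_from_left T s ->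
            kappa (kappa S) s).
  { intros s Ts Hs Happ. apply kappa2_of_approached; [apply HS; auto; lra |].
    intros d Hd. destruct (Happ (Rmin d (s - t0))) as [r [Tr Hr]];
      [apply Rmin_pos; lra |].
    pose proof (Rmin_l d (s - t0)). pose proof (Rmin_r d (s - t0)).
    exists r. split; [apply Hbefore; auto |]; lra. }
  apply (comparison_principle T (fun s => phase_norm (y s) (yd s)) phi
           (1 + p1 + q1) t0 t HT); [lra | exact Tt0 | exact (proj2 (proj1 Ht))
    | apply sqrt_pos | exact Hphi | | | | exact Ht0t].
  - intros s Ts Hs Hsig. pose proof (Hbefore s Ts Hs) as Ks.
    destruct (Hyd s Ks) as [Dyd Hode]. destruct (Hbd s Ks (proj1 Hs)) as [Hp Hq].
    apply (phase_norm_sigma_le T p q y yd ydd p1 q1 s (Hy s (proj1 Ks)));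
      [exact Dyd | exact Hode | exact Hp | exact Hq | exact Ts | lra].
  - intros s Ts Hs Hsig. pose proof (Hbefore s Ts Hs) as Ks.
    destruct (Hyd s Ks) as [Dyd Hode]. destruct (Hbd s Ks (proj1 Hs)) as [Hp Hq].
    exact (phase_norm_right_dense_le T p q y yd ydd p1 q1 s
             (Hy s (proj1 Ks)) Dyd Hode Hp Hq Hsig).
  - intros s Ts Hs Happ. pose proof (Hleft s Ts Hs Happ) as Ks.
    exact (phase_norm_left_le T y yd ydd s (Hy s (proj1 Ks)) (proj1 (Hyd s Ks)) Ts).
Qed.
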